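(* Let $D\subset\mathbb{R}^2$ be a domain, $v\colon D\to\mathbb{R}^2$ a diffeomorphism onto its image, and let $A\colon[0,\infty)\to\mathbb{SL}(2)$ be a geodesic of $\mathbb{SL}(2)$, where $\mathbb{SL}(2)\subset\mathbb{R}^{2\times2}\cong\mathbb{R}^4$ carries the Riemannian metric induced by the Euclidean metric of $\mathbb{R}^4$. Then $\varphi(t,\alpha)=A(t)v(\alpha)$ is a solution of the Lagrangian incompressible Euler problem on $D$.
   Context: $\mathbb{SL}(2)$ is the group of real $2\times2$ matrices of determinant $1$, a $3$-dimensional submanifold of $\mathbb{R}^{2\times 2}\cong\mathbb{R}^4$. For $\varphi(t,\alpha)=\varphi^t(\alpha)$, primes denote $t$-derivatives and $d\varphi^t$ the Jacobian in $\alpha$. ''Solution of the Lagrangian incompressible Euler problem on $D$'' means: each $\varphi^t$ is a diffeomorphism of $D$ onto its image, $\det(d\varphi^t)=\det(d\varphi^0)\ne0$ for all $t\ge0$, and there is a scalar function $p(t,\alpha)$ with $(d\varphi^t)^T\varphi''+\nabla_\alpha p=0$. *)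

From Stdlib Require Import Reals.
Open Scope R_scope.

Definition R2 : Type := (R * R)%type.

Record M2 : Type := mkM2 { a11 : R; a12 : R; a21 : R; a22 : R }.

Definition det (m : M2) : R := a11 m * a22 m - a12 m * a21 m.

Definition mulv (m : M2) (x : R2) : R2 :=
  (a11 m * fst x + a12 m * snd x, a21 m * fst x + a22 m * snd x).

Definition frob (m n : M2) : R :=
  a11 m * a11 n + a12 m * a12 n + a21 m * a21 n + a22 m * a22 n.

Definition InSL2 (m : M2) : Prop := det m = 1.

(** differential of det at A applied to X; the tangent space of the regular
    level set SL(2) at A is its kernel *)
Definition ddet (A X : M2) : R :=
  a11 A * a22 X + a11 X * a22 A - a12 A * a21 X - a12 X * a21 A.
Definition TangentSL2 (A X : M2) : Prop := ddet A X = 0.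

(** derivative of f : R -> R at t relative to an interval I
    (one-sided at endpoints of I) *)
Definition deriv_on (I : R -> Prop) (f : R -> R) (t l : R) : Prop :=
  limit1_in (fun h => (f (t + h) - f t) / h) (fun h => h <> 0 /\ I (t + h)) l 0.

Definition Ihalf (t : R) : Prop := 0 <= t.

Definition derivM (I : R -> Prop) (A : R -> M2) (t : R) (B : M2) : Prop :=
  deriv_on I (fun s => a11 (A s)) t (a11 B) /\
  deriv_on I (fun s => a12 (A s)) t (a12 B) /\
  deriv_on I (fun s => a21 (A s)) t (a21 B) /\
  deriv_on I (fun s => a22 (A s)) t (a22 B).

(** Geodesic of SL(2) (induced metric from R^4) on [0,oo):
    a C^2 curve in SL(2) whose acceleration is normal to SL(2). *)
Definition geodesic_SL2 (A : R -> M2) : Prop :=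
  (forall t, 0 <= t -> InSL2 (A t)) /\
  exists A1 A2 : R -> M2,
    forall t, 0 <= t ->
      derivM Ihalf A t (A1 t) /\ derivM Ihalf A1 t (A2 t) /\
      (forall X, TangentSL2 (A t) X -> frob (A2 t) X = 0).

Definition dist2sq (x y : R2) : R := (fst x - fst y)^2 + (snd x - snd y)^2.

Definition is_open (U : R2 -> Prop) : Prop :=
  forall x, U x -> exists r, 0 < r /\ forall y, dist2sq x y < r^2 -> U y.

Definition is_connected (U : R2 -> Prop) : Prop :=
  forall P Q : R2 -> Prop, is_open P -> is_open Q ->
    (forall x, U x -> P x \/ Q x) ->
    (forall x, U x -> P x -> Q x -> False) ->
    (exists x, U x /\ P x) -> (exists x, U x /\ Q x) -> False.

Definition domain (D : R2 -> Prop) : Prop :=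
  (exists x, D x) /\ is_open D /\ is_connected D.

Definition partial1 (f : R2 -> R) (x : R2) (l : R) : Prop :=
  derivable_pt_lim (fun s => f (s, snd x)) (fst x) l.
Definition partial2 (f : R2 -> R) (x : R2) (l : R) : Prop :=
  derivable_pt_lim (fun s => f (fst x, s)) (snd x) l.

Definition cont_on (U : R2 -> Prop) (f : R2 -> R) : Prop :=
  forall x, U x -> forall eps, 0 < eps -> exists delta, 0 < delta /\
    forall y, U y -> dist2sq x y < delta^2 -> Rabs (f y - f x) < eps.

Fixpoint Ck (n : nat) (U : R2 -> Prop) (f : R2 -> R) : Prop :=
  match n with
  | O => cont_on U f
  | S m => exists g1 g2 : R2 -> R,
      (forall x, U x -> partial1 f x (g1 x) /\ partial2 f x (g2 x)) /\
      Ck m U g1 /\ Ck m U g2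
  end.

Definition smooth (U : R2 -> Prop) (f : R2 -> R) : Prop := forall n, Ck n U f.

Definition smooth2 (U : R2 -> Prop) (f : R2 -> R2) : Prop :=
  smooth U (fun x => fst (f x)) /\ smooth U (fun x => snd (f x)).

Definition image (U : R2 -> Prop) (f : R2 -> R2) (y : R2) : Prop :=
  exists x, U x /\ f x = y.

Definition diffeo_onto_image (U : R2 -> Prop) (f : R2 -> R2) : Prop :=
  smooth2 U f /\
  (forall x y, U x -> U y -> f x = f y -> x = y) /\
  is_open (image U f) /\
  exists g : R2 -> R2, smooth2 (image U f) g /\
    (forall x, U x -> g (f x) = x) /\
    (forall y, image U f y -> f (g y) = y).

Definition jac (f : R2 -> R2) (x : R2) (J : M2) : Prop :=
  partial1 (fun y => fst (f y)) x (a11 J) /\ partial2 (fun y => fst (f y)) x (a12 J) /\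
  partial1 (fun y => snd (f y)) x (a21 J) /\ partial2 (fun y => snd (f y)) x (a22 J).

Definition lagrangian_euler (D : R2 -> Prop) (phi : R -> R2 -> R2) : Prop :=
  (forall t, 0 <= t -> diffeo_onto_image D (phi t)) /\
  (forall t alpha, 0 <= t -> D alpha ->
     exists Jt J0, jac (phi t) alpha Jt /\ jac (phi 0) alpha J0 /\
       det Jt = det J0 /\ det J0 <> 0) /\
  exists (p : R -> R2 -> R) (V W : R -> R2 -> R2),
    forall t alpha, 0 <= t -> D alpha ->
      deriv_on Ihalf (fun s => fst (phi s alpha)) t (fst (V t alpha)) /\
      deriv_on Ihalf (fun s => snd (phi s alpha)) t (snd (V t alpha)) /\
      deriv_on Ihalf (fun s => fst (V s alpha)) t (fst (W t alpha)) /\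
      deriv_on Ihalf (fun s => snd (V s alpha)) t (snd (W t alpha)) /\
      exists (J : M2) (g1 g2 : R),
        jac (phi t) alpha J /\ partial1 (p t) alpha g1 /\ partial2 (p t) alpha g2 /\
        (* ((d phi^t)^T phi'')_j + (grad_alpha p)_j = 0, j = 1, 2 *)
        a11 J * fst (W t alpha) + a21 J * snd (W t alpha) + g1 = 0 /\
        a12 J * fst (W t alpha) + a22 J * snd (W t alpha) + g2 = 0.

(* Since [det A(t) = 1], each [phi^t = A(t) v] is again a diffeomorphism
   onto its image, with Jacobian [A(t) Dv] and hence the same determinant as
   [phi^0]; that determinant is nonzero because [v] has a differentiable
   inverse.  A vector [C] normal to SL(2) at [B] satisfies [B^T C = lam I], so
   along the geodesic [(d phi^t)^T phi'' = Dv^T A^T A'' v = lam Dv^T v], which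
   is the gradient of [lam |v|^2 / 2]; the pressure [p = - lam |v|^2 / 2]
   balances it. *)

From Pilot Require Import Defs.
From Stdlib Require Import Reals Lra Psatz FunctionalExtensionality.
From Coquelicot Require Import Coquelicot.
(* Coquelicot shadows some names of Defs, e.g. [domain]. *)
Import Pilot.Defs.
Open Scope R_scope.

Definition mmul (m n : M2) : M2 :=
  mkM2 (a11 m * a11 n + a12 m * a21 n) (a11 m * a12 n + a12 m * a22 n)
       (a21 m * a11 n + a22 m * a21 n) (a21 m * a12 n + a22 m * a22 n).

Definition mtr (m : M2) : M2 := mkM2 (a11 m) (a21 m) (a12 m) (a22 m).

Definition mscal (c : R) : M2 := mkM2 c 0 0 c.

Definition madj (m : M2) : M2 := mkM2 (a22 m) (- a12 m) (- a21 m) (a11 m).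

Lemma det_mmul (m n : M2) : det (mmul m n) = det m * det n.
Proof. unfold det, mmul; simpl; ring. Qed.

Lemma mmul_1r (m : M2) : mmul m (mscal 1) = m.
Proof. destruct m; unfold mmul, mscal; simpl; f_equal; ring. Qed.

Lemma mulv_mmul (m n : M2) (x : R2) : mulv (mmul m n) x = mulv m (mulv n x).
Proof. unfold mulv, mmul; simpl; f_equal; ring. Qed.

Lemma mtr_mmul (m n : M2) : mtr (mmul m n) = mmul (mtr n) (mtr m).
Proof. unfold mtr, mmul; simpl; f_equal; ring. Qed.

Lemma mulv_mscal (c : R) (x : R2) : mulv (mscal c) x = (c * fst x, c * snd x).
Proof. unfold mulv, mscal; simpl; f_equal; ring. Qed.

Lemma mmul_madj (m : M2) : mmul m (madj m) = mscal (det m).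
Proof. unfold mmul, madj, mscal, det; simpl; f_equal; ring. Qed.

Lemma madj_mmul (m : M2) : mmul (madj m) m = mscal (det m).
Proof. unfold mmul, madj, mscal, det; simpl; f_equal; ring. Qed.

Lemma mulv_madj (m : M2) (y : R2) : det m = 1 -> mulv m (mulv (madj m) y) = y.
Proof.
  intros Hm; rewrite <- mulv_mmul, mmul_madj, Hm, mulv_mscal.
  destruct y; simpl; f_equal; ring.
Qed.

Lemma madj_mulv (m : M2) (y : R2) : det m = 1 -> mulv (madj m) (mulv m y) = y.
Proof.
  intros Hm; rewrite <- mulv_mmul, madj_mmul, Hm, mulv_mscal.
  destruct y; simpl; f_equal; ring.
Qed.

(* The tangent space at B contains B N for every traceless N, since
   [ddet B (B N) = det B * tr N]; testing against a basis of such N forces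
   [B^T C] to be scalar. *)
Lemma normal_SL2_tr_mul (B C : M2) :
  (forall X, TangentSL2 B X -> frob C X = 0) ->
  mmul (mtr B) C = mscal (a11 B * a11 C + a21 B * a21 C).
Proof.
  intros HN.
  assert (N12 : frob C (mkM2 0 (a11 B) 0 (a21 B)) = 0)
    by (apply HN; unfold TangentSL2, ddet; simpl; ring).
  assert (N21 : frob C (mkM2 (a12 B) 0 (a22 B) 0) = 0)
    by (apply HN; unfold TangentSL2, ddet; simpl; ring).
  assert (Ndiag : frob C (mkM2 (a11 B) (- a12 B) (a21 B) (- a22 B)) = 0)
    by (apply HN; unfold TangentSL2, ddet; simpl; ring).
  unfold frob in N12, N21, Ndiag; simpl in N12, N21, Ndiag.
  unfold mmul, mtr, mscal; simpl; f_equal; lra.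
Qed.

Lemma deriv_on_lincomb (I : R -> Prop) (f g : R -> R) (t lf lg a b : R) :
  deriv_on I f t lf -> deriv_on I g t lg ->
  deriv_on I (fun s => f s * a + g s * b) t (lf * a + lg * b).
Proof.
  unfold deriv_on; intros Hf Hg.
  replace (fun h => (f (t + h) * a + g (t + h) * b - (f t * a + g t * b)) / h)
    with (fun h => (f (t + h) - f t) / h * (fun _ => a) h + (g (t + h) - g t) / h * (fun _ => b) h)
    by (apply functional_extensionality; intro h; unfold Rdiv; ring).
  apply limit_plus; apply limit_mul; try assumption; apply (limit_free (fun x => x)).
Qed.

Lemma derivM_mulv (I : R -> Prop) (A : R -> M2) (t : R) (B : M2) (z : R2) :
  derivM I A t B ->
  deriv_on I (fun s => fst (mulv (A s) z)) t (fst (mulv B z)) /\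
  deriv_on I (fun s => snd (mulv (A s) z)) t (snd (mulv B z)).
Proof.
  intros [H11 [H12 [H21 H22]]]; unfold mulv; simpl.
  split; apply deriv_on_lincomb; assumption.
Qed.

Lemma derivable_pt_lim_lincomb (f g : R -> R) (x lf lg a b : R) :
  derivable_pt_lim f x lf -> derivable_pt_lim g x lg ->
  derivable_pt_lim (fun s => a * f s + b * g s) x (a * lf + b * lg).
Proof.
  intros Hf Hg.
  apply (derivable_pt_lim_plus (fun s => a * f s) (fun s => b * g s));
    apply derivable_pt_lim_scal; assumption.
Qed.

Lemma derivable_pt_lim_affine_bound (f : R -> R) (x l eps : R) :
  derivable_pt_lim f x l -> 0 < eps -> exists d, 0 < d /\
    forall h, Rabs h < d -> Rabs (f (x + h) - f x - l * h) <= eps * Rabs h.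
Proof.
  intros Hf Heps.
  destruct (Hf eps Heps) as [[d Hd] Hd']; simpl in Hd'.
  exists d; split; [exact Hd|]; intros h Hh.
  destruct (Req_dec h 0) as [->|Hh0].
  - rewrite Rplus_0_r, Rabs_R0; replace (f x - f x - l * 0) with 0 by ring.
    rewrite Rabs_R0; lra.
  - replace (f (x + h) - f x - l * h) with (((f (x + h) - f x) / h - l) * h)
      by (field; exact Hh0).
    rewrite Rabs_mult; apply Rmult_le_compat_r; [apply Rabs_pos|].
    left; exact (Hd' h Hh0 Hh).
Qed.

Lemma derivable_pt_lim_ext_ball (f g : R -> R) (x l r : R) : 0 < r ->
  (forall t, Rabs (t - x) < r -> f t = g t) ->
  derivable_pt_lim f x l -> derivable_pt_lim g x l.
Proof.
  intros Hr Hfg Hf; apply is_derive_Reals; apply is_derive_Reals in Hf.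
  apply (is_derive_ext_loc f g x l); [|exact Hf].
  exists (mkposreal r Hr); intros t Ht; apply Hfg; exact Ht.
Qed.

Lemma dist2sq_lt_of_coord (x y : R2) (d : R) :
  Rabs (fst y - fst x) < d -> Rabs (snd y - snd x) < d -> dist2sq x y < 2 * d ^ 2.
Proof.
  unfold dist2sq; intros H1 H2.
  rewrite <- (pow2_abs (fst x - fst y)), <- (pow2_abs (snd x - snd y)).
  rewrite (Rabs_minus_sym (fst x)), (Rabs_minus_sym (snd x)).
  pose proof (Rabs_pos (fst y - fst x)); pose proof (Rabs_pos (snd y - snd x)); nra.
Qed.

Lemma coord_lt_of_dist2sq (x y : R2) (d : R) : 0 < d ->
  dist2sq x y < d ^ 2 -> Rabs (fst y - fst x) < d /\ Rabs (snd y - snd x) < d.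
Proof.
  unfold dist2sq; intros Hd H.
  rewrite <- (pow2_abs (fst x - fst y)), <- (pow2_abs (snd x - snd y)) in H.
  rewrite (Rabs_minus_sym (fst x)), (Rabs_minus_sym (snd x)) in H.
  pose proof (Rabs_pos (fst y - fst x)); pose proof (Rabs_pos (snd y - snd x)); split; nra.
Qed.

(* Pointwise [cont_on]: [cont_on U f] is convertible to
   [forall x, U x -> cont_at U f x]. *)
Definition cont_at (U : R2 -> Prop) (f : R2 -> R) (x : R2) : Prop :=
  forall eps, 0 < eps -> exists delta, 0 < delta /\
    forall y, U y -> dist2sq x y < delta ^ 2 -> Rabs (f y - f x) < eps.

Lemma cont_on_lincomb (U : R2 -> Prop) (f g : R2 -> R) (a b : R) :
  cont_on U f -> cont_on U g -> cont_on U (fun x => a * f x + b * g x).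
Proof.
  intros Hf Hg x Hx eps Heps.
  pose proof (Rabs_pos a); pose proof (Rabs_pos b).
  set (e1 := eps / (2 * (Rabs a + 1))); set (e2 := eps / (2 * (Rabs b + 1))).
  assert (E1 : e1 * (2 * (Rabs a + 1)) = eps) by (unfold e1; field; lra).
  assert (E2 : e2 * (2 * (Rabs b + 1)) = eps) by (unfold e2; field; lra).
  assert (P1 : 0 < e1) by (unfold e1; apply Rdiv_lt_0_compat; lra).
  assert (P2 : 0 < e2) by (unfold e2; apply Rdiv_lt_0_compat; lra).
  destruct (Hf x Hx e1 P1) as [d1 [Hd1 H1]]; destruct (Hg x Hx e2 P2) as [d2 [Hd2 H2]].
  exists (Rmin d1 d2); split; [apply Rmin_pos; assumption|]; intros y Hy Hd.
  pose proof (Rmin_l d1 d2); pose proof (Rmin_r d1 d2).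
  assert (0 < Rmin d1 d2) by (apply Rmin_pos; assumption).
  specialize (H1 y Hy ltac:(nra)); specialize (H2 y Hy ltac:(nra)).
  replace (a * f y + b * g y - (a * f x + b * g x)) with (a * (f y - f x) + b * (g y - g x))
    by ring.
  eapply Rle_lt_trans; [apply Rabs_triang|]; rewrite !Rabs_mult.
  pose proof (Rabs_pos (f y - f x)); pose proof (Rabs_pos (g y - g x)); nra.
Qed.

Lemma Ck_lincomb (U : R2 -> Prop) (n : nat) : forall (f g : R2 -> R) (a b : R),
  Ck n U f -> Ck n U g -> Ck n U (fun x => a * f x + b * g x).
Proof.
  induction n as [|n IH]; intros f g a b Hf Hg; simpl in *.
  - apply cont_on_lincomb; assumption.
  - destruct Hf as [f1 [f2 [Hfp [Hf1 Hf2]]]]; destruct Hg as [g1 [g2 [Hgp [Hg1 Hg2]]]].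
    exists (fun x => a * f1 x + b * g1 x), (fun x => a * f2 x + b * g2 x).
    split; [|split; apply IH; assumption].
    intros x Hx; destruct (Hfp x Hx) as [F1 F2]; destruct (Hgp x Hx) as [G1 G2].
    split; apply derivable_pt_lim_lincomb; assumption.
Qed.

Lemma mean_value_affine_bound (f f' : R -> R) (x u L e : R) :
  (forall c, Rabs (c - x) <= Rabs (u - x) ->
     derivable_pt_lim f c (f' c) /\ Rabs (f' c - L) <= e) ->
  Rabs (f u - f x - L * (u - x)) <= e * Rabs (u - x).
Proof.
  intros Hf.
  replace (f u - f x - L * (u - x)) with ((f u - L * u) - (f x - L * x)) by ring.
  apply (bounded_variation (fun s => f s - L * s) (fun s => f' s - L)).
  intros c Hc; destruct (Hf c Hc) as [Hd Hb]; split; [|exact Hb].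
  apply is_derive_Reals.
  replace (f' c - L) with (f' c - L * 1) by ring.
  apply derivable_pt_lim_minus; [exact Hd|].
  apply (derivable_pt_lim_scal id), derivable_pt_lim_id.
Qed.

(* Only the first partial derivative needs to be continuous: the increment
   in the first variable is controlled by the mean value theorem, the one in
   the second variable by the derivative at [x] alone. *)
Lemma C1_differentiable (U : R2 -> Prop) (f g1 g2 : R2 -> R) (x : R2) :
  is_open U -> U x ->
  (forall z, U z -> partial1 f z (g1 z) /\ partial2 f z (g2 z)) ->
  cont_at U g1 x ->
  differentiable_pt_lim (fun u w => f (u, w)) (fst x) (snd x) (g1 x) (g2 x).
Proof.
  intros HU Hx Hp Hc; destruct x as [x1 x2]; simpl; intros [eps Heps]; simpl.
  destruct (HU _ Hx) as [r [Hr HrU]].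
  destruct (Hc (eps / 2)) as [d1 [Hd1 Hg1]]; [lra|].
  destruct (derivable_pt_lim_affine_bound _ _ _ (eps / 2) (proj2 (Hp _ Hx)))
    as [d2 [Hd2 S2]]; [lra|]; simpl in S2.
  pose proof (Rmin_l (Rmin (r / 2) (d1 / 2)) d2); pose proof (Rmin_r (Rmin (r / 2) (d1 / 2)) d2).
  pose proof (Rmin_l (r / 2) (d1 / 2)); pose proof (Rmin_r (r / 2) (d1 / 2)).
  set (d := Rmin (Rmin (r / 2) (d1 / 2)) d2) in *.
  assert (Hd : 0 < d) by (apply Rmin_pos; [apply Rmin_pos|]; lra).
  assert (Hdr : 2 * d ^ 2 < r ^ 2).
  { assert (d * d <= r / 2 * (r / 2)) by (apply Rmult_le_compat; lra). nra. }
  assert (Hdd1 : 2 * d ^ 2 < d1 ^ 2).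
  { assert (d * d <= d1 / 2 * (d1 / 2)) by (apply Rmult_le_compat; lra). nra. }
  exists (mkposreal d Hd); intros u w Hu Hw; simpl in Hu, Hw.
  assert (Hball : forall c, Rabs (c - x1) <= Rabs (u - x1) ->
            U (c, w) /\ dist2sq (x1, x2) (c, w) < d1 ^ 2).
  { intros c Hcu; pose proof (dist2sq_lt_of_coord (x1, x2) (c, w) d ltac:(simpl; lra) Hw).
    split; [apply HrU|]; lra. }
  assert (S1 : Rabs (f (u, w) - f (x1, w) - g1 (x1, x2) * (u - x1))
               <= eps / 2 * Rabs (u - x1)).
  { apply (mean_value_affine_bound (fun s => f (s, w)) (fun s => g1 (s, w))).
    intros c Hcu; destruct (Hball c Hcu) as [HUc Hdc].
    split; [exact (proj1 (Hp _ HUc)) | left; exact (Hg1 _ HUc Hdc)]. }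
  specialize (S2 (w - x2) ltac:(lra)); replace (x2 + (w - x2)) with w in S2 by ring.
  replace (f (u, w) - f (x1, x2) - (g1 (x1, x2) * (u - x1) + g2 (x1, x2) * (w - x2))) with
    ((f (u, w) - f (x1, w) - g1 (x1, x2) * (u - x1))
     + (f (x1, w) - f (x1, x2) - g2 (x1, x2) * (w - x2))) by ring.
  eapply Rle_trans; [apply Rabs_triang|].
  pose proof (Rmax_l (Rabs (u - x1)) (Rabs (w - x2))).
  pose proof (Rmax_r (Rabs (u - x1)) (Rabs (w - x2))).
  nra.
Qed.

Lemma differentiable_cont_at (U : R2 -> Prop) (f : R2 -> R) (x : R2) (l1 l2 : R) :
  differentiable_pt_lim (fun u w => f (u, w)) (fst x) (snd x) l1 l2 -> cont_at U f x.
Proof.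
  intros Hd eps Heps.
  assert (Hc : continuity_2d_pt (fun u w => f (u, w)) (fst x) (snd x))
    by (apply differentiable_continuity_pt; exists l1, l2; exact Hd).
  destruct (Hc (mkposreal eps Heps)) as [[d Hdp] Hdd]; simpl in Hdd.
  exists d; split; [exact Hdp|]; intros y _ Hy.
  destruct (coord_lt_of_dist2sq x y d Hdp Hy).
  destruct x, y; apply Hdd; assumption.
Qed.

Lemma Ck_cont (U : R2 -> Prop) (n : nat) : is_open U ->
  forall f, Ck n U f -> cont_on U f.
Proof.
  intros HU; induction n as [|n IH]; intros f Hf; [exact Hf|].
  destruct Hf as [g1 [g2 [Hp [Hg1 _]]]]; intros x Hx.
  apply (differentiable_cont_at U f x (g1 x) (g2 x)).
  exact (C1_differentiable U f g1 g2 x HU Hx Hp (IH g1 Hg1 x Hx)).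
Qed.

Definition frechet (f : R2 -> R2) (x : R2) (J : M2) : Prop :=
  differentiable_pt_lim (fun u w => fst (f (u, w))) (fst x) (snd x) (a11 J) (a12 J) /\
  differentiable_pt_lim (fun u w => snd (f (u, w))) (fst x) (snd x) (a21 J) (a22 J).

Lemma jac_id (x : R2) : jac (fun y => y) x (mscal 1).
Proof.
  unfold jac, partial1, partial2; simpl.
  repeat split; first [apply derivable_pt_lim_id | apply derivable_pt_lim_const].
Qed.

Lemma jac_mulv (M : M2) (f : R2 -> R2) (x : R2) (J : M2) :
  jac f x J -> jac (fun y => mulv M (f y)) x (mmul M J).
Proof.
  unfold jac, partial1, partial2, mulv, mmul; simpl; intros [P11 [P12 [P21 P22]]].
  repeat split; apply derivable_pt_lim_lincomb; assumption.
Qed.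

Lemma partials_comp (G : R2 -> R) (f : R2 -> R2) (x : R2) (J : M2) (l1 l2 : R) :
  differentiable_pt_lim (fun u w => G (u, w)) (fst (f x)) (snd (f x)) l1 l2 ->
  jac f x J ->
  partial1 (fun y => G (f y)) x (l1 * a11 J + l2 * a21 J) /\
  partial2 (fun y => G (f y)) x (l1 * a12 J + l2 * a22 J).
Proof.
  destruct x as [x1 x2]; unfold jac, partial1, partial2; simpl.
  intros HG [P11 [P12 [P21 P22]]].
  assert (Hpair : forall p : R2, G p = G (fst p, snd p)) by (intros []; reflexivity).
  split.
  - replace (fun s => G (f (s, x2))) with (fun s => G (fst (f (s, x2)), snd (f (s, x2))))
      by (apply functional_extensionality; intro; rewrite <- Hpair; reflexivity).
    exact (derivable_pt_lim_comp_2d (fun u w => G (u, w)) _ _ x1 _ _ _ _ HG P11 P21).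
  - replace (fun s => G (f (x1, s))) with (fun s => G (fst (f (x1, s)), snd (f (x1, s))))
      by (apply functional_extensionality; intro; rewrite <- Hpair; reflexivity).
    exact (derivable_pt_lim_comp_2d (fun u w => G (u, w)) _ _ x2 _ _ _ _ HG P12 P22).
Qed.

Lemma jac_comp (G f : R2 -> R2) (x : R2) (H J : M2) :
  frechet G (f x) H -> jac f x J -> jac (fun y => G (f y)) x (mmul H J).
Proof.
  intros [H1 H2] HJ.
  destruct (partials_comp (fun z => fst (G z)) f x J _ _ H1 HJ) as [P11 P12].
  destruct (partials_comp (fun z => snd (G z)) f x J _ _ H2 HJ) as [P21 P22].
  repeat split; assumption.
Qed.

Lemma jac_unique (f : R2 -> R2) (x : R2) (J K : M2) : jac f x J -> jac f x K -> J = K.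
Proof.
  destruct J, K; unfold jac; simpl; intros [J11 [J12 [J21 J22]]] [K11 [K12 [K21 K22]]].
  f_equal; eapply uniqueness_limite; eassumption.
Qed.

Lemma jac_ext_ball (f g : R2 -> R2) (x : R2) (J : M2) (r : R) : 0 < r ->
  (forall y, dist2sq x y < r ^ 2 -> f y = g y) -> jac f x J -> jac g x J.
Proof.
  destruct x as [x1 x2]; intros Hr Hfg; unfold jac, partial1, partial2; simpl.
  assert (Hsq : forall a, Rabs a < r -> a ^ 2 < r ^ 2).
  { intros a Ha; rewrite <- pow2_abs; pose proof (Rabs_pos a); nra. }
  assert (E1 : forall t, Rabs (t - x1) < r -> f (t, x2) = g (t, x2)).
  { intros t Ht; apply Hfg; unfold dist2sq; simpl; rewrite Rabs_minus_sym in Ht.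
    replace (x2 - x2) with 0 by ring; specialize (Hsq _ Ht); lra. }
  assert (E2 : forall t, Rabs (t - x2) < r -> f (x1, t) = g (x1, t)).
  { intros t Ht; apply Hfg; unfold dist2sq; simpl; rewrite Rabs_minus_sym in Ht.
    replace (x1 - x1) with 0 by ring; specialize (Hsq _ Ht); lra. }
  intros [P11 [P12 [P21 P22]]]; repeat split;
    (eapply derivable_pt_lim_ext_ball; [exact Hr| |eassumption]);
    intros t Ht; simpl; first [rewrite (E1 t Ht) | rewrite (E2 t Ht)]; reflexivity.
Qed.

Lemma Ck1_jac (U : R2 -> Prop) (f : R2 -> R2) :
  Ck 1 U (fun y => fst (f y)) -> Ck 1 U (fun y => snd (f y)) ->
  exists Df : R2 -> M2, forall x, U x -> jac f x (Df x).
Proof.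
  intros [p1 [p2 [Hp _]]] [q1 [q2 [Hq _]]].
  exists (fun x => mkM2 (p1 x) (p2 x) (q1 x) (q2 x)); intros x Hx.
  destruct (Hp x Hx), (Hq x Hx); repeat split; assumption.
Qed.

Lemma C1_frechet (U : R2 -> Prop) (f : R2 -> R2) (x : R2) : is_open U -> U x ->
  Ck 1 U (fun y => fst (f y)) -> Ck 1 U (fun y => snd (f y)) ->
  exists H, frechet f x H.
Proof.
  intros HU Hx [p1 [p2 [Hp [Hp1 _]]]] [q1 [q2 [Hq [Hq1 _]]]].
  exists (mkM2 (p1 x) (p2 x) (q1 x) (q2 x)); split; simpl.
  - exact (C1_differentiable U _ p1 p2 x HU Hx Hp (Hp1 x Hx)).
  - exact (C1_differentiable U _ q1 q2 x HU Hx Hq (Hq1 x Hx)).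
Qed.

(* Differentiating [g (v y) = y] gives [Dg (v x) * J = 1]. *)
Lemma jac_diffeo_det_neq0 (D : R2 -> Prop) (v : R2 -> R2) (x : R2) (J : M2) :
  is_open D -> D x -> diffeo_onto_image D v -> jac v x J -> det J <> 0.
Proof.
  intros HD Dx [_ [_ [Hopen [g [[Hg1 Hg2] [Hgv _]]]]]] HJ.
  destruct (C1_frechet _ g (v x) Hopen (ex_intro _ x (conj Dx eq_refl)) (Hg1 1%nat) (Hg2 1%nat))
    as [H HH].
  destruct (HD x Dx) as [r [Hr Hball]].
  assert (Hid : jac (fun y => g (v y)) x (mscal 1)).
  { apply (jac_ext_ball (fun y => y) _ x _ r Hr); [|apply jac_id].
    intros y Hy; symmetry; apply Hgv, Hball, Hy. }
  pose proof (jac_unique _ x _ _ (jac_comp g v x H J HH HJ) Hid) as HHJ.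
  intros HJ0; apply (f_equal det) in HHJ; rewrite det_mmul, HJ0 in HHJ.
  unfold det, mscal in HHJ; simpl in HHJ; lra.
Qed.

Lemma dist2sq_mulv_le (m : M2) (z w : R2) :
  dist2sq (mulv m z) (mulv m w) <= frob m m * dist2sq z w.
Proof.
  destruct z as [z1 z2], w as [w1 w2]; unfold dist2sq, mulv, frob; simpl.
  pose proof (pow2_ge_0 (a11 m * (z2 - w2) - a12 m * (z1 - w1))).
  pose proof (pow2_ge_0 (a21 m * (z2 - w2) - a22 m * (z1 - w1))).
  nra.
Qed.

Lemma mulv_uniform_cont (m : M2) (d : R) : 0 < d -> exists d', 0 < d' /\
  forall z w, dist2sq z w < d' ^ 2 -> dist2sq (mulv m z) (mulv m w) < d ^ 2.
Proof.
  intros Hd.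
  assert (HK : 0 <= frob m m) by (unfold frob; nra).
  exists (d / (1 + frob m m)); split; [apply Rdiv_lt_0_compat; lra|].
  intros z w Hzw; pose proof (dist2sq_mulv_le m z w).
  assert (0 <= dist2sq z w) by (unfold dist2sq; pose proof (pow2_ge_0 (fst z - fst w));
                                pose proof (pow2_ge_0 (snd z - snd w)); lra).
  assert (Ed : d / (1 + frob m m) * (1 + frob m m) = d) by (field; lra).
  set (d' := d / (1 + frob m m)) in *.
  assert (0 < d') by (unfold d'; apply Rdiv_lt_0_compat; lra).
  assert (frob m m * dist2sq z w <= frob m m * d' ^ 2) by (apply Rmult_le_compat_l; lra).
  assert ((1 + frob m m) * d' ^ 2 <= d ^ 2) by (rewrite <- Ed; nra).
  nra.
Qed.

Lemma Ck_comp_mulv (U V : R2 -> Prop) (m : M2) : is_open U ->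
  (forall z, V z -> U (mulv m z)) ->
  forall n F, Ck n U F -> Ck n V (fun z => F (mulv m z)).
Proof.
  intros HU HVU; induction n as [|n IH]; intros F HF; simpl in HF |- *.
  - intros z Hz eps Heps.
    destruct (HF _ (HVU z Hz) eps Heps) as [d [Hd HFd]].
    destruct (mulv_uniform_cont m d Hd) as [d' [Hd' Hm]].
    exists d'; split; [exact Hd'|]; intros w Hw Hzw; apply HFd; auto.
  - destruct HF as [g1 [g2 [Hp [Hg1 Hg2]]]].
    exists (fun z => a11 m * g1 (mulv m z) + a21 m * g2 (mulv m z)),
           (fun z => a12 m * g1 (mulv m z) + a22 m * g2 (mulv m z)).
    split; [|split; apply Ck_lincomb; apply IH; assumption].
    intros z Hz.
    pose proof (C1_differentiable U F g1 g2 _ HU (HVU z Hz) Hp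
                  (Ck_cont U n HU g1 Hg1 _ (HVU z Hz))) as HF.
    pose proof (jac_mulv m _ z _ (jac_id z)) as Hm; rewrite mmul_1r in Hm.
    destruct (partials_comp F (mulv m) z m _ _ HF Hm) as [P1 P2].
    rewrite (Rmult_comm (a11 m)), (Rmult_comm (a21 m)), (Rmult_comm (a12 m)), (Rmult_comm (a22 m)).
    split; assumption.
Qed.

Lemma open_image_mulv (D : R2 -> Prop) (v : R2 -> R2) (m : M2) : det m = 1 ->
  is_open (image D v) -> is_open (image D (fun x => mulv m (v x))).
Proof.
  intros Hm Hopen y [x [Dx <-]].
  destruct (Hopen (v x) (ex_intro _ x (conj Dx eq_refl))) as [r [Hr Hball]].
  destruct (mulv_uniform_cont (madj m) r Hr) as [d [Hd Hadj]].
  exists d; split; [exact Hd|]; intros w Hw.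
  specialize (Hadj _ _ Hw); rewrite madj_mulv in Hadj by exact Hm.
  destruct (Hball _ Hadj) as [x' [Dx' Ex']].
  exists x'; split; [exact Dx'|]; rewrite Ex'; apply mulv_madj, Hm.
Qed.

Lemma diffeo_onto_image_mulv (D : R2 -> Prop) (v : R2 -> R2) (m : M2) : det m = 1 ->
  diffeo_onto_image D v -> diffeo_onto_image D (fun x => mulv m (v x)).
Proof.
  intros Hm [[Hs1 Hs2] [Hinj [Hopen [g [[Hg1 Hg2] [Hgv Hvg]]]]]].
  assert (Hpre : forall z, image D (fun x => mulv m (v x)) z -> image D v (mulv (madj m) z)).
  { intros z [x [Dx <-]]; exists x; split; [exact Dx|]; rewrite madj_mulv; auto. }
  split; [|split; [|split]].
  - split; intro n; apply Ck_lincomb; auto.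
  - intros x y Dx Dy Exy; apply Hinj; auto.
    rewrite <- (madj_mulv m (v x)), <- (madj_mulv m (v y)), Exy; auto.
  - apply open_image_mulv; assumption.
  - exists (fun y => g (mulv (madj m) y)); split; [split|split].
    + intro n; exact (Ck_comp_mulv _ _ (madj m) Hopen Hpre n _ (Hg1 n)).
    + intro n; exact (Ck_comp_mulv _ _ (madj m) Hopen Hpre n _ (Hg2 n)).
    + intros x Dx; rewrite madj_mulv by exact Hm; auto.
    + intros y Hy; rewrite Hvg by (apply Hpre, Hy); apply mulv_madj, Hm.
Qed.

Definition half_sqnorm (z : R2) : R := (fst z * fst z + snd z * snd z) / 2.

Lemma derivable_pt_lim_half_sqnorm (F : R -> R2) (x l1 l2 : R) :
  derivable_pt_lim (fun s => fst (F s)) x l1 -> derivable_pt_lim (fun s => snd (F s)) x l2 ->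
  derivable_pt_lim (fun s => half_sqnorm (F s)) x (l1 * fst (F x) + l2 * snd (F x)).
Proof.
  intros H1 H2.
  set (f := fun s => fst (F s)) in *; set (g := fun s => snd (F s)) in *.
  replace (fun s => half_sqnorm (F s)) with (mult_real_fct (/ 2) (f * f + g * g)%F)
    by (apply functional_extensionality; intro s; unfold half_sqnorm, mult_real_fct,
          plus_fct, mult_fct, f, g; field).
  replace (l1 * fst (F x) + l2 * snd (F x))
    with (/ 2 * (l1 * f x + f x * l1 + (l2 * g x + g x * l2))) by (unfold f, g; field).
  apply derivable_pt_lim_scal, derivable_pt_lim_plus; apply derivable_pt_lim_mult; assumption.
Qed.

Lemma partials_half_sqnorm (c : R) (f : R2 -> R2) (x : R2) (J : M2) : jac f x J ->
  partial1 (fun y => c * half_sqnorm (f y)) x (c * fst (mulv (mtr J) (f x))) /\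
  partial2 (fun y => c * half_sqnorm (f y)) x (c * snd (mulv (mtr J) (f x))).
Proof.
  destruct x as [x1 x2]; unfold jac, partial1, partial2, mulv, mtr; simpl.
  intros [P11 [P12 [P21 P22]]].
  split; apply derivable_pt_lim_scal.
  - apply (derivable_pt_lim_half_sqnorm (fun s => f (s, x2))); assumption.
  - apply (derivable_pt_lim_half_sqnorm (fun s => f (x1, s))); assumption.
Qed.

Lemma mulv_mtr_mmul_scalar (B C K : M2) (z : R2) (lam : R) :
  mmul (mtr B) C = mscal lam ->
  mulv (mtr (mmul B K)) (mulv C z) = (lam * fst (mulv (mtr K) z), lam * snd (mulv (mtr K) z)).
Proof.
  intros HBC; rewrite mtr_mmul, !mulv_mmul, <- (mulv_mmul (mtr B)), HBC, mulv_mscal.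
  unfold mulv; simpl; f_equal; ring.
Qed.

Theorem theorem4p3 (D : R2 -> Prop) (v : R2 -> R2) (A : R -> M2) :
  domain D -> diffeo_onto_image D v -> geodesic_SL2 A ->
  lagrangian_euler D (fun t alpha => mulv (A t) (v alpha)).
Proof.
  intros [_ [HD _]] Hv [HSL [A1 [A2 HA]]].
  destruct (Ck1_jac D v (proj1 (proj1 Hv) 1%nat) (proj2 (proj1 Hv) 1%nat)) as [Dv HDv].
  split; [|split].
  - intros t Ht; apply diffeo_onto_image_mulv; [apply HSL, Ht | exact Hv].
  - intros t a Ht Da; exists (mmul (A t) (Dv a)), (mmul (A 0) (Dv a)).
    rewrite !det_mmul, (HSL t Ht), (HSL 0 (Rle_refl 0)), !Rmult_1_l.
    repeat split; try (apply jac_mulv, HDv, Da).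
    exact (jac_diffeo_det_neq0 D v a _ HD Da Hv (HDv a Da)).
  - set (lam t := a11 (A t) * a11 (A2 t) + a21 (A t) * a21 (A2 t)).
    exists (fun t z => - lam t * half_sqnorm (v z)),
      (fun t z => mulv (A1 t) (v z)), (fun t z => mulv (A2 t) (v z)).
    intros t a Ht Da; destruct (HA t Ht) as [HA1 [HA2 Hnormal]].
    destruct (derivM_mulv _ _ t _ (v a) HA1) as [V1 V2].
    destruct (derivM_mulv _ _ t _ (v a) HA2) as [W1 W2].
    destruct (partials_half_sqnorm (- lam t) v a _ (HDv a Da)) as [G1 G2].
    pose proof (mulv_mtr_mmul_scalar _ _ (Dv a) (v a) _ (normal_SL2_tr_mul _ _ Hnormal)) as Hacc.
    refine (conj V1 (conj V2 (conj W1 (conj W2 _)))).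
    exists (mmul (A t) (Dv a)), (- lam t * fst (mulv (mtr (Dv a)) (v a))),
      (- lam t * snd (mulv (mtr (Dv a)) (v a))).
    refine (conj (jac_mulv _ _ _ _ (HDv a Da)) (conj G1 (conj G2 _))).
    injection Hacc as E1 E2; unfold mulv, mtr in E1, E2 |- *; simpl in E1, E2 |- *.
    split; [rewrite E1 | rewrite E2]; unfold lam; ring.
Qed.
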